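(* Let $\mathbf P\in\mathbb{R}^{n\times n}$ be symmetric positive definite and $\mathbf c\in\mathbb{R}^n$, and let $\ell_{\mathbf c,\mathbf P}:\mathcal{I}_{\mathbf P}\to\mathbb{R}$ be the function defined below. Then (1) $\ell_{\mathbf c,\mathbf P}$ is concave on $\mathcal{I}_{\mathbf P}$; and (2) $\ell_{\mathbf c,\mathbf P}(\beta)<0$ for all $\beta\in\mathcal{I}_{\mathbf P}$.
   Context: Let $\mathbf P=\mathbf V\mathbf D\mathbf V^\top$ be a spectral decomposition with $\mathbf V$ orthogonal and $\mathbf D$ diagonal with diagonal entries $\lambda_i=D_{ii}>0$, $i=1,\dots,n$. Let $\bar{\mathbf c}=\mathbf V^\top\mathbf c$ and $S(\bar{\mathbf c})=\{i\in\{1,\dots,n\}:\bar c_i\neq 0\}$. Let $\lambda_{\min}(\mathbf P)$ be the smallest eigenvalue of $\mathbf P$. Define the interval $\mathcal{I}_{\mathbf P}=(\lambda_{\min}(\mathbf P)^{-1},\infty)$ if there is $i\in S(\bar{\mathbf c})$ with $\lambda_i=\lambda_{\min}(\mathbf P)$, and $\mathcal{I}_{\mathbf P}=[\lambda_{\min}(\mathbf P)^{-1},\infty)$ otherwise. Define $$\ell_{\mathbf c,\mathbf P}(\beta)=-\beta-\sum_{i\in S(\bar{\mathbf c})}\bar c_i^2\,\frac{\lambda_i\beta}{\lambda_i\beta-1},\qquad \beta\in\mathcal{I}_{\mathbf P}.$$ *)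

From HB Require Import structures.
From mathcomp Require Import all_boot all_order all_algebra.
From mathcomp Require Import reals.
Set Implicit Arguments. Unset Strict Implicit. Unset Printing Implicit Defensive.
Import Order.TTheory GRing.Theory Num.Theory.
Local Open Scope ring_scope.

Section Defs.
Variable R : realType.

Definition sym_posdef n (P : 'M[R]_n) : Prop :=
  P^T = P /\ forall x : 'cV[R]_n, x != 0 -> 0 < (x^T *m P *m x) 0 0.

Definition orthogonal_mx n (V : 'M[R]_n) : Prop :=
  V^T *m V = 1%:M /\ V *m V^T = 1%:M.

Definition spectral_decomp n (P V : 'M[R]_n) (lam : 'rV[R]_n) : Prop :=
  orthogonal_mx V /\ (forall i, 0 < lam 0 i) /\ P = V *m diag_mx lam *m V^T.

Definition is_lambda_min n (P : 'M[R]_n) (lmin : R) : Prop :=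
  eigenvalue P lmin /\ forall a, eigenvalue P a -> lmin <= a.

Definition cbar n (V : 'M[R]_n) (c : 'cV[R]_n) : 'cV[R]_n := V^T *m c.

Definition I_P n (V : 'M[R]_n) (lam : 'rV[R]_n) (c : 'cV[R]_n) (lmin : R)
  : pred R :=
  fun beta =>
    if [exists i : 'I_n, (cbar V c i 0 != 0) && (lam 0 i == lmin)]
    then lmin^-1 < beta else lmin^-1 <= beta.

Definition ell n (V : 'M[R]_n) (lam : 'rV[R]_n) (c : 'cV[R]_n) (beta : R) : R :=
  - beta - \sum_(i < n | cbar V c i 0 != 0)
      (cbar V c i 0) ^+ 2 * (lam 0 i * beta / (lam 0 i * beta - 1)).

Definition concave_on (S : pred R) (f : R -> R) : Prop :=
  forall x y t, S x -> S y -> 0 <= t <= 1 ->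
    t * f x + (1 - t) * f y <= f (t * x + (1 - t) * y).

End Defs.

(* Every [lam_i] is an eigenvalue of [P], hence [0 < lmin <= lam_i], and on [I_P] each
   index [i] of the support of [cbar] has [lam_i beta > 1]; when [lam_i = lmin] this is
   exactly why the endpoint [lmin^-1] is excluded.  There the term
   [lam_i beta / (lam_i beta - 1) = 1 + (lam_i beta - 1)^-1] is positive and convex in
   [beta], being the inverse of a positive affine function.  So [ell] is [-beta] minus a
   nonnegative combination of positive convex functions: concave and negative. *)

From HB Require Import structures.
From mathcomp Require Import all_boot all_order all_algebra.
From mathcomp Require Import reals.
From mathcomp Require Import ring lra.
Import Order.TTheory GRing.Theory Num.Theory.
Local Open Scope ring_scope.

Lemma sym_posdef_eigenvalue_gt0 (R : realType) n (P : 'M[R]_n) a :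
  sym_posdef P -> eigenvalue P a -> 0 < a.
Proof.
move=> [_ posP] /eigenvalueP [v vP v_neq0].
have := posP v^T; rewrite trmx_eq0 => /(_ v_neq0).
rewrite trmxK vP -scalemxAl mxE.
have : 0 <= (v *m v^T) 0 0.
  by rewrite mxE; apply: sumr_ge0 => j _; rewrite mxE -expr2 sqr_ge0.
nra.
Qed.

Lemma spectral_decomp_eigenvalue (R : realType) n (P V : 'M[R]_n) lam i :
  spectral_decomp P V lam -> eigenvalue P (lam 0 i).
Proof.
move=> [[VtV _] [_ ->]]; apply/eigenvalueP; exists (row i V^T).
  rewrite -row_mul !mulmxA VtV mul1mx mul_diag_mx.
  by apply/rowP => j; rewrite !mxE.
apply/eqP => row_eq0.
have : row i (V^T *m V) = 0 by rewrite row_mul row_eq0 mul0mx.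
by rewrite VtV => /rowP /(_ i) /eqP; rewrite !mxE eqxx oner_eq0.
Qed.

Lemma invr_convex (R : realFieldType) (a b t : R) : 0 < a -> 0 < b -> 0 <= t <= 1 ->
  (t * a + (1 - t) * b)^-1 <= t * a^-1 + (1 - t) * b^-1.
Proof.
move=> a_gt0 b_gt0 /andP [t_ge0 t_le1].
have s_gt0 : 0 < t * a + (1 - t) * b by nra.
rewrite -subr_ge0.
have -> : t * a^-1 + (1 - t) * b^-1 - (t * a + (1 - t) * b)^-1 =
    (t * a + (1 - t) * b)^-1 * a^-1 * b^-1 * (t * (1 - t) * (a - b) ^+ 2).
  by field; rewrite ?gt_eqF.
apply: mulr_ge0; last by rewrite mulr_ge0 ?sqr_ge0 //; nra.
by rewrite !mulr_ge0 // ltW // invr_gt0.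
Qed.

Lemma divr_subr1_convex (R : realFieldType) (u v t : R) :
  1 < u -> 1 < v -> 0 <= t <= 1 ->
  (t * u + (1 - t) * v) / (t * u + (1 - t) * v - 1) <=
  t * (u / (u - 1)) + (1 - t) * (v / (v - 1)).
Proof.
move=> u_gt1 v_gt1 t01.
have mix_gt1 : 1 < t * u + (1 - t) * v.
  by case/andP: t01 => *; case: (leP u v) => *; nra.
have shiftE (w : R) : 1 < w -> w / (w - 1) = 1 + (w - 1)^-1.
  by move=> w_gt1; field; rewrite subr_eq0 gt_eqF.
have inv_le := @invr_convex _ (u - 1) (v - 1) t.
rewrite !subr_gt0 in inv_le; have {}inv_le := inv_le u_gt1 v_gt1 t01.
rewrite !shiftE //.
have -> : t * u + (1 - t) * v - 1 = t * (u - 1) + (1 - t) * (v - 1) by ring.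
lra.
Qed.

Section EllOnInterval.
Variables (R : realType) (n : nat) (V : 'M[R]_n) (lam : 'rV[R]_n) (c : 'cV[R]_n).

Lemma ell_concave_on (S : pred R) :
  (forall beta i, S beta -> cbar V c i 0 != 0 -> 1 < lam 0 i * beta) ->
  concave_on S (ell V lam c).
Proof.
move=> S_gt1 x y t Sx Sy t01; rewrite /ell.
set F := fun b i => cbar V c i 0 ^+ 2 * (lam 0 i * b / (lam 0 i * b - 1)).
rewrite -/(F x) -/(F y) -/(F (t * x + (1 - t) * y)).
suff : \sum_(i < n | cbar V c i 0 != 0) F (t * x + (1 - t) * y) i <=
    t * (\sum_(i < n | cbar V c i 0 != 0) F x i)
    + (1 - t) * (\sum_(i < n | cbar V c i 0 != 0) F y i) by lra.
rewrite !mulr_sumr -big_split; apply: ler_sum => i ci; rewrite /F /=.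
rewrite (mulrCA t) (mulrCA (1 - t)) -mulrDr ler_wpM2l ?sqr_ge0 //.
have -> : lam 0 i * (t * x + (1 - t) * y) = t * (lam 0 i * x) + (1 - t) * (lam 0 i * y)
  by ring.
by apply: divr_subr1_convex => //; apply: S_gt1.
Qed.

Lemma ell_lt0 beta : 0 < beta ->
  (forall i, cbar V c i 0 != 0 -> 1 < lam 0 i * beta) -> ell V lam c beta < 0.
Proof.
move=> beta_gt0 lam_gt1; rewrite /ell.
suff : 0 <= \sum_(i < n | cbar V c i 0 != 0)
    cbar V c i 0 ^+ 2 * (lam 0 i * beta / (lam 0 i * beta - 1)) by lra.
apply: sumr_ge0 => i ci; rewrite mulr_ge0 ?sqr_ge0 // divr_ge0 //.
  by apply: ltW; apply: lt_trans (lam_gt1 i ci).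
by rewrite subr_ge0 ltW ?lam_gt1.
Qed.

Variable lmin : R.

Lemma I_P_ge_inv beta : I_P V lam c lmin beta -> lmin^-1 <= beta.
Proof. by rewrite /I_P; case: ifP => // _ /ltW. Qed.

Hypotheses (lmin_gt0 : 0 < lmin) (lmin_le : forall i, lmin <= lam 0 i).

Lemma I_P_gt0 beta : I_P V lam c lmin beta -> 0 < beta.
Proof. by move/I_P_ge_inv; apply: lt_le_trans; rewrite invr_gt0. Qed.

Lemma I_P_lam_gt1 beta i :
  I_P V lam c lmin beta -> cbar V c i 0 != 0 -> 1 < lam 0 i * beta.
Proof.
move=> Ibeta ci; have beta_gt0 : 0 < beta by apply: I_P_gt0 Ibeta.
have lmin_invE : lmin * lmin^-1 = 1 by rewrite mulfV // gt_eqF.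
have lam_ge := lmin_le i; move: Ibeta; rewrite /I_P.
case: ifP => [_ | /negbT no_lmin].
  by rewrite -[_ < beta](ltr_pM2l lmin_gt0) lmin_invE => ?; nra.
rewrite -[_ <= beta](ler_pM2l lmin_gt0) lmin_invE => lmin_beta.
have : lmin < lam 0 i.
  rewrite lt_neqAle lam_ge andbT; apply: contra no_lmin => /eqP lmin_eq.
  by apply/existsP; exists i; rewrite ci lmin_eq eqxx.
nra.
Qed.

End EllOnInterval.

Theorem lemma2 (R : realType) (n : nat) (P V : 'M[R]_n) (lam : 'rV[R]_n)
  (c : 'cV[R]_n) (lmin : R) :
  sym_posdef P ->
  spectral_decomp P V lam ->
  is_lambda_min P lmin ->
  concave_on (I_P V lam c lmin) (ell V lam c) /\
  (forall beta, I_P V lam c lmin beta -> ell V lam c beta < 0).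
Proof.
move=> posP decP [eig_lmin lmin_min].
have lmin_gt0 : 0 < lmin by apply: sym_posdef_eigenvalue_gt0 posP eig_lmin.
have lmin_le i : lmin <= lam 0 i.
  by apply/lmin_min/spectral_decomp_eigenvalue/decP.
have lam_gt1 beta i :
    I_P V lam c lmin beta -> cbar V c i 0 != 0 -> 1 < lam 0 i * beta.
  exact: I_P_lam_gt1.
split; first exact: ell_concave_on.
move=> beta Ibeta; apply: ell_lt0 => [|i]; last exact: lam_gt1.
exact: I_P_gt0 Ibeta.
Qed.
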